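(* For every $W\in\mathrm{Gr}^{ad}$, $L_W=(R_W)'$, i.e. $L_W=\{q\in Q: qR_W\subset A_1\}$.
   Context: $A_1=\mathbb C[z,\partial]$, $\partial=d/dz$, with quotient skew field $Q\supset\mathbb C(z)[\partial]$. $\mathrm{Gr}^{ad}$: subspaces $W=m_V^{-1}V\subset\mathbb C(z)$ where $V\subset\mathbb C[z]$ is a finite intersection of subspaces $V_\lambda\supset(z-\lambda)^{r}\mathbb C[z]$ (distinct $\lambda$) and $m_V=\prod(z-\lambda)^{\dim\mathbb C[z]/V_\lambda}$. $R_W=\{D\in\mathbb C(z)[\partial]: D.\mathbb C[z]\subset W\}$, $L_W=\{D\in\mathbb C(z)[\partial]: D.W\subset\mathbb C[z]\}$. It is known (Cannings–Holland) that $W=\{D.1: D\in R_W\}$. *)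

From mathcomp Require Import all_boot all_order all_algebra.
From mathcomp Require Import complex Rstruct.
Set Implicit Arguments. Unset Strict Implicit. Unset Printing Implicit Defensive.
Import Order.TTheory GRing.Theory Num.Theory.
Local Open Scope ring_scope.

Definition CC : closedFieldType := (Rdefinitions.R)[i].

Notation Cz := {fraction {poly CC}}.

Notation "x %:F" := (@FracField.tofrac _ x) : ring_scope.

Definition fderiv (f : Cz) : Cz :=
  let r := repr f in
  ((\n_r)^`() * \d_r - \n_r * (\d_r)^`())%:F / ((\d_r) ^+ 2)%:F.

(* An element D = \sum_i D`_i ∂^i of ℂ(z)[∂] is encoded by its (finite) sequence of
   coefficients, stored as a {poly Cz} (only used as a coefficient container: the
   ring product of ℂ(z)[∂] is [dmul] below, NOT the polynomial product). *)
Notation DOp := {poly Cz}.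

Definition dact (D : DOp) (f : Cz) : Cz :=
  \sum_(i < size D) D`_i * iter i fderiv f.

Definition dmul (P R : DOp) : DOp :=
  \sum_(i < size P) \sum_(k < size R) \sum_(l < i.+1)
     ('C(i, l)%:R * P`_i * iter l fderiv R`_k) *: 'X^(i + k - l).

Definition in_A1 (D : DOp) : Prop := forall i, exists p : {poly CC}, D`_i = p%:F.

Definition is_subspace (V : {poly CC} -> Prop) : Prop :=
  V 0 /\ (forall p q, V p -> V q -> V (p + q)) /\ (forall (c : CC) p, V p -> V (c *: p)).

(* dim_ℂ (ℂ[z]/V) = n : there are n polynomials whose classes form a basis of ℂ[z]/V. *)
Definition codim_is (V : {poly CC} -> Prop) (n : nat) : Prop :=
  exists ps : 'I_n -> {poly CC},
    (forall c : 'I_n -> CC, V (\sum_i c i *: ps i) -> forall i, c i = 0) /\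
    (forall p, exists c : 'I_n -> CC, V (p - \sum_i c i *: ps i)).

(* W ∈ Gr^ad : W = m_V^{-1} V, V = ∩_{λ ∈ lams} V_λ (distinct λ),
   (z-λ)^r ℂ[z] ⊂ V_λ, m_V = ∏ (z-λ)^{dim ℂ[z]/V_λ}. *)
Definition in_Grad (W : Cz -> Prop) : Prop :=
  exists (lams : seq CC) (Vs : CC -> {poly CC} -> Prop) (ns : CC -> nat),
    uniq lams /\
    (forall l, l \in lams ->
       is_subspace (Vs l) /\
       (exists r : nat, forall p : {poly CC}, Vs l (('X - l%:P) ^+ r * p)) /\
       codim_is (Vs l) (ns l)) /\
    (forall f : Cz, W f <->
       exists v : {poly CC}, (forall l, l \in lams -> Vs l v) /\
         f = v%:F / (\prod_(l <- lams) ('X - l%:P) ^+ ns l)%:F).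

Definition R_W (W : Cz -> Prop) (D : DOp) : Prop :=
  forall p : {poly CC}, W (dact D p%:F).
Definition L_W (W : Cz -> Prop) (D : DOp) : Prop :=
  forall f, W f -> exists p : {poly CC}, dact D f = p%:F.

(* (Q, j) is "the" quotient skew field of A_1, together with the inclusion
   j : ℂ(z)[∂] ↪ Q: Q is a division ring, j is an injective ring morphism, and every
   element of Q is a right fraction a s^{-1} of elements of A_1 (classical Ore
   quotient ring; unique up to isomorphism). *)
Definition is_quot_skew_field (Q : unitRingType) (j : DOp -> Q) : Prop :=
  (forall x : Q, x != 0 -> x \is a GRing.unit) /\
  injective j /\
  j 1 = 1 /\
  (forall x y, j (x + y) = j x + j y) /\
  (forall x y, j (dmul x y) = j x * j y) /\
  (forall q : Q, exists a s, in_A1 a /\ in_A1 s /\ s != 0 /\ q = j a * (j s)^-1).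

From mathcomp Require Import all_boot all_order all_algebra.
From mathcomp Require Import complex Rstruct.
From mathcomp Require Import ring.
Set Implicit Arguments. Unset Strict Implicit. Unset Printing Implicit Defensive.
Import Order.TTheory GRing.Theory Num.Theory.
Local Open Scope ring_scope.

(* If D maps W into C[z] and E maps C[z] into W, then D E maps C[z] into itself and
   therefore has polynomial coefficients (characteristic 0).
   Conversely, multiplication by a suitable nonzero x = c/m_V lies in R_W, so q x = a
   in A_1 forces q = a x^-1 in C(z)[d].  Every f in W is E . 1 for some E in R_W
   (Cannings--Holland; E is built by Chinese remaindering over the points of V and
   truncated Taylor expansion), hence q . f = (q E) . 1 is the constant coefficient of
   an element of A_1, a polynomial. *)

(* The quotient rule [(A/B)' = (A'B - AB')/B^2] respects sums and products;
   stated over abstract atoms since [field] is slow on [{fraction _}]. *)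
Lemma quotient_ruleD (F : fieldType) (A B C E A' B' C' E' : F) : B != 0 -> E != 0 ->
  ((A' * E + A * E' + (C' * B + C * B')) * (B * E) - (A * E + C * B) * (B' * E + B * E'))
    / (B * E) ^+ 2
  = (A' * B - A * B') / B ^+ 2 + (C' * E - C * E') / E ^+ 2.
Proof. by move=> B0 E0; field; rewrite B0 E0. Qed.

Lemma quotient_ruleM (F : fieldType) (A B C E A' B' C' E' : F) : B != 0 -> E != 0 ->
  ((A' * C + A * C') * (B * E) - A * C * (B' * E + B * E')) / (B * E) ^+ 2 =
  (A' * B - A * B') / B ^+ 2 * (C / E) + A / B * ((C' * E - C * E') / E ^+ 2).
Proof. by move=> B0 E0; field; rewrite B0 E0. Qed.

Section RationalDerivation.
Variable K : fieldType.
Local Notation Fz := {fraction {poly K}}.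

Definition rderiv (f : Fz) : Fz :=
  let r := repr f in
  ((\n_r)^`() * \d_r - \n_r * (\d_r)^`())%:F / ((\d_r) ^+ 2)%:F.

Lemma frac_repr (f : Fz) : f = (\n_(repr f))%:F / (\d_(repr f))%:F.
Proof.
have dn0 : (\d_(repr f))%:F != 0 :> Fz by rewrite tofrac_eq0 denom_ratioP.
apply/(mulIf dn0); rewrite divfK //.
rewrite -{1}[f]reprK; set r := repr f.
unlock FracField.tofrac.
rewrite -[_ * _]/(FracField.mul _ _) -FracField.pi_mul; apply/eqmodP => /=.
by rewrite FracField.equivfE /= /FracField.mulf !numden_Ratio ?mulr1 ?oner_neq0
  ?denom_ratioP // mulrC.
Qed.

Lemma rderiv_frac (n d : {poly K}) : d != 0 ->
  rderiv (n%:F / d%:F) = (n^`() * d - n * d^`())%:F / (d ^+ 2)%:F.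
Proof.
move=> d0; rewrite /rderiv; set r := repr _.
have dr0 : \d_r != 0 := denom_ratioP r.
have cross : \n_r * d - n * \d_r = 0.
  apply/eqP; rewrite subr_eq0 -tofrac_eq !tofracM -eqr_div ?tofrac_eq0 //.
  by rewrite -frac_repr.
have cross' := congr1 (fun p => p^`()) cross; rewrite /= derivB !derivM deriv0 in cross'.
apply/eqP; rewrite eqr_div ?tofrac_eq0 ?expf_neq0 // -!tofracM tofrac_eq; apply/eqP.
(* The difference is a combination of [cross] and its derivative. *)
apply/eqP; rewrite -subr_eq0; apply/eqP.
transitivity (\d_r * d * ((\n_r)^`() * d + \n_r * d^`() - (n^`() * \d_r + n * (\d_r)^`()))
   - ((\d_r)^`() * d + \d_r * d^`()) * (\n_r * d - n * \d_r)); first by ring.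
by rewrite cross cross' !(mulr0, subr0).
Qed.

Lemma rderiv_tofrac (p : {poly K}) : rderiv p%:F = (p^`())%:F.
Proof.
rewrite -[p%:F]divr1 -tofrac1 rderiv_frac ?oner_neq0 //.
by rewrite derivC !mulr1 mulr0 subr0 expr1n tofrac1 divr1.
Qed.

Lemma rderivD (f g : Fz) : rderiv (f + g) = rderiv f + rderiv g.
Proof.
rewrite [f]frac_repr [g]frac_repr.
move: (denom_ratioP (repr f)) (denom_ratioP (repr g)).
move: (\n_(repr f)) (\d_(repr f)) (\n_(repr g)) (\d_(repr g)) => a b c e b0 e0.
have Fb : b%:F != 0 :> Fz by rewrite tofrac_eq0.
have Fe : e%:F != 0 :> Fz by rewrite tofrac_eq0.
rewrite (addf_div _ _ Fb Fe) -(tofracM a e) -(tofracM c b) -(tofracM b e) -tofracD.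
rewrite !rderiv_frac ?mulf_neq0 //.
rewrite !(derivD, derivM) !(tofracD, tofracM, tofracN, tofracXn).
move: (a%:F) (b%:F) (c%:F) (e%:F) (a^`()%:F) (b^`()%:F) (c^`()%:F) (e^`()%:F) Fb Fe.
by move=> A B C E A' B' C' E'; exact: (@quotient_ruleD _ A B C E A' B' C' E').
Qed.

Lemma rderivM (f g : Fz) : rderiv (f * g) = rderiv f * g + f * rderiv g.
Proof.
rewrite [f]frac_repr [g]frac_repr.
move: (denom_ratioP (repr f)) (denom_ratioP (repr g)).
move: (\n_(repr f)) (\d_(repr f)) (\n_(repr g)) (\d_(repr g)) => a b c e b0 e0.
have Fb : b%:F != 0 :> Fz by rewrite tofrac_eq0.
have Fe : e%:F != 0 :> Fz by rewrite tofrac_eq0.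
rewrite mulf_div -(tofracM a c) -(tofracM b e) !rderiv_frac ?mulf_neq0 //.
rewrite !(derivD, derivM) !(tofracD, tofracM, tofracN, tofracXn).
move: (a%:F) (b%:F) (c%:F) (e%:F) (a^`()%:F) (b^`()%:F) (c^`()%:F) (e^`()%:F) Fb Fe.
by move=> A B C E A' B' C' E'; exact: (@quotient_ruleM _ A B C E A' B' C' E').
Qed.
Lemma rderiv0 : rderiv 0 = 0.
Proof. by rewrite -tofrac0 rderiv_tofrac deriv0 tofrac0. Qed.

Lemma rderiv_natr k : rderiv k%:R = 0.
Proof.
by rewrite -(rmorph_nat (@FracField.tofrac _)) rderiv_tofrac -polyC_natr derivC tofrac0.
Qed.

Lemma rderiv_sum (I : Type) (r : seq I) (P : pred I) (F : I -> Fz) :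
  rderiv (\sum_(i <- r | P i) F i) = \sum_(i <- r | P i) rderiv (F i).
Proof. exact: (big_morph _ rderivD rderiv0). Qed.

Lemma iter_rderiv_sum n (I : Type) (r : seq I) (P : pred I) (F : I -> Fz) :
  iter n rderiv (\sum_(i <- r | P i) F i) = \sum_(i <- r | P i) iter n rderiv (F i).
Proof. by elim: n => //= n ->; rewrite rderiv_sum. Qed.

Lemma iter_rderiv0 n : iter n rderiv 0 = 0.
Proof. by elim: n => //= n ->; rewrite rderiv0. Qed.

Lemma iter_rderiv_tofrac n (p : {poly K}) : iter n rderiv p%:F = (p^`(n))%:F.
Proof. by elim: n => // n IH; rewrite iterS IH rderiv_tofrac derivnS. Qed.

Lemma iter_rderivM n f g : iter n rderiv (f * g) =
  \sum_(l < n.+1) 'C(n, l)%:R * iter l rderiv f * iter (n - l) rderiv g.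
Proof.
elim: n => [|n IH]; first by rewrite big_ord_recl big_ord0 addr0 mul1r.
rewrite iterS IH rderiv_sum.
under eq_bigr => l _ do
  rewrite -mulrA rderivM rderiv_natr mul0r add0r rderivM mulrDr -!iterS.
rewrite big_split [in RHS]big_ord_recl bin0 subn0 mul1r.
under [in RHS]eq_bigr => l _ do
  rewrite (_ : nat_of_ord (lift ord0 l) = l.+1) // binS natrD !mulrDl subSS.
rewrite big_split addrA [RHS]addrC; congr (_ + _).
  by apply: eq_bigr => l _; rewrite mulrA.
rewrite [in LHS]big_ord_recl bin0 subn0 mul1r.
rewrite [in RHS]big_ord_recr /= bin_small // !mul0r addr0.
congr (_ + _); apply: eq_bigr => l _.
by rewrite /bump add0n add1n mulrA -(subnSK (ltn_ord l)).
Qed.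
End RationalDerivation.

Section DifferentialOperators.
Variable K : fieldType.
Local Notation Fz := {fraction {poly K}}.
Local Notation dop := {poly Fz}.

Definition dop_act (D : dop) (f : Fz) : Fz :=
  \sum_(i < size D) D`_i * iter i (@rderiv K) f.

Definition dop_mul (P R : dop) : dop :=
  \sum_(i < size P) \sum_(k < size R) \sum_(l < i.+1)
     ('C(i, l)%:R * P`_i * iter l (@rderiv K) R`_k) *: 'X^(i + k - l).

Lemma dop_actE (D : dop) f n : (size D <= n)%N ->
  dop_act D f = \sum_(i < n) D`_i * iter i (@rderiv K) f.
Proof.
move=> Dn; rewrite /dop_act (big_ord_widen n (fun i => D`_i * iter i _ f)) //.
rewrite big_mkcond; apply: eq_bigr => i _.
by case: ltnP => // Di; rewrite nth_default // mul0r.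
Qed.

Lemma dop_actD (D1 D2 : dop) f : dop_act (D1 + D2) f = dop_act D1 f + dop_act D2 f.
Proof.
set n := maxn (size D1) (size D2).
rewrite !(@dop_actE _ _ n) ?leq_maxl ?leq_maxr ?(leq_trans (size_polyD _ _)) //.
by rewrite -big_split; apply: eq_bigr => i _; rewrite coefD mulrDl.
Qed.

Lemma dop_act0 f : dop_act 0 f = 0.
Proof. by rewrite /dop_act size_poly0 big_ord0. Qed.

Lemma dop_act_sum (I : Type) (r : seq I) (P : pred I) (F : I -> dop) f :
  dop_act (\sum_(i <- r | P i) F i) f = \sum_(i <- r | P i) dop_act (F i) f.
Proof. exact: (big_morph (dop_act^~ f) (fun D1 D2 => dop_actD D1 D2 f) (dop_act0 f)). Qed.

Lemma dop_actZXn (c : Fz) n f : dop_act (c *: 'X^n) f = c * iter n (@rderiv K) f.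
Proof.
rewrite (@dop_actE _ _ n.+1) ?(leq_trans (size_scale_leq _ _)) ?size_polyXn //.
rewrite big_ord_recr /= big1 ?add0r => [|i _]; first by rewrite coefZ coefXn eqxx mulr1.
by rewrite coefZ coefXn (ltn_eqF (ltn_ord i)) mulr0 mul0r.
Qed.

Lemma dop_actC (c : Fz) f : dop_act c%:P f = c * f.
Proof.
rewrite (@dop_actE _ _ 1) ?size_polyC ?leq_b1 //.
by rewrite big_ord1 coefC.
Qed.

Lemma dop_act1 (D : dop) : dop_act D 1 = D`_0.
Proof.
rewrite (@dop_actE _ _ (size D).+1) // big_ord_recl mulr1 big1 ?addr0 // => i _.
by rewrite -tofrac1 iter_rderiv_tofrac derivn_poly0 ?size_poly1 // tofrac0 mulr0.
Qed.

Lemma dop_act_mul (P R : dop) f : dop_act (dop_mul P R) f = dop_act P (dop_act R f).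
Proof.
rewrite /dop_mul dop_act_sum [in RHS]/dop_act; apply: eq_bigr => i _.
rewrite dop_act_sum iter_rderiv_sum mulr_sumr; apply: eq_bigr => k _.
rewrite dop_act_sum iter_rderivM mulr_sumr; apply: eq_bigr => l _.
rewrite dop_actZXn -iterD addnBAC; last by rewrite -ltnS.
by rewrite -!mulrA mulrCA.
Qed.

Lemma dop_mulE (P R : dop) n1 n2 : (size P <= n1)%N -> (size R <= n2)%N ->
  dop_mul P R = \sum_(i < n1) \sum_(k < n2) \sum_(l < i.+1)
     ('C(i, l)%:R * P`_i * iter l (@rderiv K) R`_k) *: 'X^(i + k - l).
Proof.
move=> Pn1 Rn2; rewrite /dop_mul (big_ord_widen n1 (fun i : nat => \sum_(k < size R)
  \sum_(l < i.+1) ('C(i, l)%:R * P`_i * iter l _ R`_k) *: 'X^(i + k - l)) Pn1).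
rewrite big_mkcond; apply: eq_bigr => i _; case: ltnP => Pi; last first.
  rewrite big1 // => k _; rewrite big1 // => l _.
  by rewrite nth_default // mulr0 mul0r scale0r.
rewrite (big_ord_widen n2 (fun k : nat => \sum_(l < i.+1)
  ('C(i, l)%:R * P`_i * iter l _ R`_k) *: 'X^(i + k - l)) Rn2).
rewrite big_mkcond; apply: eq_bigr => k _; case: ltnP => // Rk.
by rewrite big1 // => l _; rewrite (nth_default _ Rk) iter_rderiv0 mulr0 scale0r.
Qed.

Lemma dop_mulC (c d : Fz) : dop_mul c%:P d%:P = (c * d)%:P.
Proof.
have coefC0 (e : Fz) : e%:P`_0 = e by rewrite coefC.
rewrite (@dop_mulE _ _ 1 1) ?size_polyC ?leq_b1 // !big_ord1 bin0 mul1r.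
transitivity ((c * d) *: 'X^0); first by congr (_ *: _); congr (_ * _); apply: coefC0.
by rewrite expr0 alg_polyC.
Qed.

End DifferentialOperators.

Section CharacteristicZero.
Variable K : fieldType.
Hypothesis charK : [pchar K] =i pred0.
Local Notation Fz := {fraction {poly K}}.

Lemma natr_fact_neq0 n : (n`!)%:R != 0 :> K.
Proof. by rewrite (pcharf0P K).1 // -lt0n fact_gt0. Qed.

Lemma dop_act_Xn (D : {poly Fz}) n :
  dop_act D ('X^n)%:F = \sum_(k < n.+1) D`_k * (('X^n)^`(k))%:F.
Proof.
set M := maxn (size D) n.+1.
rewrite (@dop_actE _ _ _ M) ?leq_maxl //.
rewrite (big_ord_widen M (fun k => D`_k * (('X^n)^`(k))%:F)) ?leq_maxr //.
rewrite [RHS]big_mkcond; apply: eq_bigr => k _; rewrite iter_rderiv_tofrac.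
by case: ltnP => // nk; rewrite derivnXn ffact_small // mulr0n tofrac0 mulr0.
Qed.

(* The coefficient of order n is read off from the action on z^n, by induction on n. *)
Lemma dop_coef_poly (D : {poly Fz}) :
  (forall p : {poly K}, exists q : {poly K}, dop_act D p%:F = q%:F) ->
  forall i, exists q : {poly K}, D`_i = q%:F.
Proof.
move=> Dpoly i; elim/ltn_ind: i => n IH.
have [q Dq] := Dpoly 'X^n.
have [r lower] : exists r : {poly K}, \sum_(k < n) D`_k * (('X^n)^`(k))%:F = r%:F.
  apply: (big_ind (fun x => exists r, x = r%:F)) => [|_ _ [a ->] [b ->]|k _].
  - by exists 0; rewrite tofrac0.
  - by exists (a + b); rewrite tofracD.
  - by have [a ->] := IH k (ltn_ord k); exists (a * ('X^n)^`(k)); rewrite tofracM.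
rewrite dop_act_Xn big_ord_recr /= lower derivnXn ffactnn subnn expr0 in Dq.
set c := (n`!)%:R : K.
have Fc : (c%:P)%:F != 0 :> Fz by rewrite tofrac_eq0 polyC_eq0 natr_fact_neq0.
exists ((q - r) * (c^-1)%:P).
apply/(mulIf Fc); rewrite tofracM -mulrA -tofracM -polyCM mulVf ?natr_fact_neq0 //.
by rewrite mulr1 tofracB -Dq polyC_natr addrAC subrr add0r.
Qed.
End CharacteristicZero.

Lemma dvdp_sum (K : fieldType) (d : {poly K}) (I : Type) (r : seq I) (P : pred I)
    (F : I -> {poly K}) :
  (forall i, P i -> d %| F i) -> d %| \sum_(i <- r | P i) F i.
Proof. by move=> dF; apply: (big_ind (dvdp d)); [exact: dvdp0 | exact: dvdp_add |]. Qed.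

(* Truncated Taylor expansion of [p] around [z], evaluated at [l]. *)
Lemma dvdp_taylor_horner (K : fieldType) (p : {poly K}) (l : K) N :
  ('X - l%:P) ^+ N %| \sum_(k < N) p^`N(k) * (l%:P - 'X) ^+ k - (p.[l])%:P.
Proof.
set M := maxn N (size p).
have taylor : (p.[l])%:P = \sum_(k < M) p^`N(k) * (l%:P - 'X) ^+ k.
  have := @nderiv_taylor_wide _ M (p^:P) 'X (l%:P - 'X) (mulrC _ _).
  rewrite size_map_polyC leq_maxr => /(_ isT).
  rewrite addrC subrK horner_map /= => ->.
  apply: eq_bigr => k _; rewrite nderivn_map.
  by rewrite -[(_^:P).['X]]/(comp_poly 'X _) comp_polyXr.
rewrite taylor -!(big_mkord xpredT (fun k => p^`N(k) * (l%:P - 'X) ^+ k)).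
rewrite (@big_cat_nat _ _ _ N 0 M) ?leq_maxl //= opprD addrA subrr add0r dvdpNr.
have := big_addn 0 M N xpredT (fun k => p^`N(k) * (l%:P - 'X) ^+ k).
rewrite add0n => ->; apply: dvdp_sum => k _.
rewrite exprD mulrA; apply: dvdp_mull.
by rewrite -[l%:P - 'X]opprB exprNn dvdp_mull.
Qed.

Section TaylorInterpolation.
Variable K : fieldType.
Hypothesis charK : [pchar K] =i pred0.
Variable lams : seq K.
Hypothesis lams_uniq : uniq lams.
Variable N : nat.
Hypothesis N_gt0 : (0 < N)%N.

Definition cofactor (l : K) : {poly K} := \prod_(m <- lams | m != l) ('X - m%:P) ^+ N.

Lemma Bezout_cofactor l :
  exists uv : {poly K} * {poly K}, uv.1 * cofactor l + uv.2 * ('X - l%:P) ^+ N == 1.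
Proof.
have cop : coprimep (cofactor l) (('X - l%:P) ^+ N).
  apply: coprimep_expr; rewrite coprimep_XsubC rootE horner_prod prodf_seq_neq0.
  apply/allP => m _; apply/implyP => ml.
  by rewrite horner_exp hornerXsubC expf_neq0 // subr_eq0 eq_sym.
by have [uv uvE] := Bezout_eq1_coprimepP _ _ cop; exists uv; rewrite uvE.
Qed.

(* Chinese remaindering: [crt_basis l] is 1 modulo [(z - l)^N] and 0 modulo
   [(z - m)^N] for the other [m] in [lams]. *)
Definition crt_basis l : {poly K} := (xchoose (Bezout_cofactor l)).1 * cofactor l.

Lemma crt_basis_eq1 l : exists w, crt_basis l = 1 - w * ('X - l%:P) ^+ N.
Proof.
rewrite /crt_basis; move: (xchooseP (Bezout_cofactor l)).
by case: (xchoose _) => u v /= /eqP uvE; exists v; rewrite -uvE addrK.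
Qed.

Lemma dvdp_crt_basis l m : m \in lams -> m != l -> ('X - m%:P) ^+ N %| crt_basis l.
Proof. by move=> m_lams ml; apply/dvdp_mull; rewrite /cofactor (big_rem m) //= ml dvdp_mulr. Qed.

Definition taylor_term (l : K) k : {poly K} := ((k`!)%:R)^-1 *: (l%:P - 'X) ^+ k.

(* Coefficients of the differential operator [p |-> \sum_k interp_coef k * p^(k)],
   which sends every [p] to a polynomial congruent to [p(l)] modulo [(z - l)^N],
   simultaneously for all [l] in [lams]. *)
Definition interp_coef k : {poly K} :=
  (k == 0)%:R + \sum_(l <- lams) crt_basis l * (taylor_term l k - (k == 0)%:R).

Lemma interp_coef0 : interp_coef 0 = 1.
Proof.
rewrite /interp_coef eqxx big1 ?addr0 // => l _.
by rewrite /taylor_term expr0 fact0 invr1 scale1r subrr mulr0.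
Qed.

Lemma sum_delta0_derivn (p : {poly K}) : \sum_(k < N) ((k : nat) == 0)%:R * p^`(k) = p.
Proof.
case: N N_gt0 => // N' _; rewrite big_ord_recl /= mul1r big1 ?addr0 // => k _.
by rewrite mul0r.
Qed.

Lemma taylor_term_derivn (p : {poly K}) l k :
  taylor_term l k * p^`(k) = p^`N(k) * (l%:P - 'X) ^+ k.
Proof.
rewrite /taylor_term nderivn_def -mul_polyC -[p^`N(k) *+ _]mulr_natr.
rewrite -(@polyC_natr K (k`!)) mulrCA mulrAC -polyCM mulVf ?natr_fact_neq0 //.
by rewrite mul1r.
Qed.

Lemma interp_sumE (p : {poly K}) : \sum_(k < N) interp_coef k * p^`(k) =
  p + \sum_(l <- lams) crt_basis l * (\sum_(k < N) p^`N(k) * (l%:P - 'X) ^+ k - p).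
Proof.
under eq_bigr => k _ do rewrite /interp_coef mulrDl.
rewrite big_split sum_delta0_derivn; congr (_ + _).
under eq_bigr => k _ do rewrite mulr_suml.
rewrite exchange_big /=; apply: eq_bigr => l _.
under eq_bigr => k _ do rewrite -mulrA mulrBl taylor_term_derivn.
by rewrite -mulr_sumr sumrB sum_delta0_derivn.
Qed.

Lemma dvdp_interp_sub_horner (p : {poly K}) l : l \in lams ->
  ('X - l%:P) ^+ N %| \sum_(k < N) interp_coef k * p^`(k) - (p.[l])%:P.
Proof.
move=> l_lams; rewrite interp_sumE (bigD1_seq l) //=.
set T := \sum_(k < N) _; set S := \sum_(i <- lams | i != l) _.
have [w ->] := crt_basis_eq1 l.
have -> : p + ((1 - w * ('X - l%:P) ^+ N) * (T - p) + S) - (p.[l])%:P =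
   (T - (p.[l])%:P) + ((- (w * (T - p))) * ('X - l%:P) ^+ N + S) by ring.
apply: dvdp_add; first exact: dvdp_taylor_horner.
apply: dvdp_add; first exact: dvdp_mull.
by apply: dvdp_sum => m ml; apply/dvdp_mulr/dvdp_crt_basis; rewrite // eq_sym.
Qed.
End TaylorInterpolation.

Section OperatorsIntoCell.
Variable K : fieldType.
Hypothesis charK : [pchar K] =i pred0.
Local Notation Fz := {fraction {poly K}}.
Variable lams : seq K.
Hypothesis lams_uniq : uniq lams.
Variable V : K -> {poly K} -> Prop.
Variable N : nat.
Hypothesis N_gt0 : (0 < N)%N.
Hypothesis V_add : forall l, l \in lams -> forall p q, V l p -> V l q -> V l (p + q).
Hypothesis V_scale : forall l, l \in lams -> forall (c : K) p, V l p -> V l (c *: p).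
Hypothesis V_ideal : forall l, l \in lams -> forall p, V l (('X - l%:P) ^+ N * p).
Variable m : {poly K}.

Definition cell (f : Fz) : Prop :=
  exists v : {poly K}, (forall l, l \in lams -> V l v) /\ f = v%:F / m%:F.

Definition lift_op (v : {poly K}) : {poly Fz} :=
  \poly_(k < N) ((v * interp_coef lams N k)%:F / m%:F).

Lemma lift_op_act v p :
  dop_act (lift_op v) p%:F = (v * \sum_(k < N) interp_coef lams N k * p^`(k))%:F / m%:F.
Proof.
rewrite (@dop_actE _ _ _ N) ?size_poly // mulr_sumr rmorph_sum mulr_suml.
apply: eq_bigr => k _.
by rewrite coef_poly ltn_ord iter_rderiv_tofrac !rmorphM mulrAC -!mulrA.
Qed.

Lemma lift_op1 v : dop_act (lift_op v) 1 = v%:F / m%:F.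
Proof.
rewrite -tofrac1 lift_op_act; congr (_%:F / _).
case: N N_gt0 => // N' _; rewrite big_ord_recl interp_coef0 derivn0 mul1r big1 ?addr0.
  by rewrite mulr1.
by move=> k _; rewrite derivn_poly0 ?mulr0 // size_poly1.
Qed.

Lemma lift_op_cell v : (forall l, l \in lams -> V l v) ->
  forall p, cell (dop_act (lift_op v) p%:F).
Proof.
move=> Vv p; rewrite lift_op_act; eexists; split; last reflexivity.
move=> l l_lams; have /dvdpP [h hE] := dvdp_interp_sub_horner charK lams_uniq N_gt0 p l_lams.
set G := \sum_(k < N) _ in hE *.
have -> : v * G = (p.[l]) *: v + ('X - l%:P) ^+ N * (v * h).
  by rewrite -mul_polyC -(subrK (p.[l])%:P G) hE; ring.
by apply: V_add => //; [apply: V_scale => //; apply: Vv | apply: V_ideal].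
Qed.

Definition ideal_gen : {poly K} := \prod_(l <- lams) ('X - l%:P) ^+ N.

Lemma mul_ideal_gen_cell p : cell (dop_act ((ideal_gen%:F / m%:F)%:P) p%:F).
Proof.
rewrite dop_actC; exists (ideal_gen * p); split; last by rewrite tofracM mulrAC.
by move=> l l_lams; rewrite /ideal_gen (bigD1_seq l) //= -mulrA; apply: V_ideal.
Qed.
End OperatorsIntoCell.

Lemma common_exponent (K : fieldType) (lams : seq K) (V : K -> {poly K} -> Prop) :
  (forall l, l \in lams -> exists r : nat, forall p, V l (('X - l%:P) ^+ r * p)) ->
  exists2 N, (0 < N)%N & forall l, l \in lams -> forall p, V l (('X - l%:P) ^+ N * p).
Proof.
elim: lams => [|a s IH] Vr; first by exists 1%N.
have [ra Va] := Vr a (mem_head _ _).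
have [N N_gt0 VN] := IH (fun l ls => Vr l (mem_behead (s := a :: s) ls)).
exists (ra + N)%N => [|l]; first by rewrite addn_gt0 N_gt0 orbT.
rewrite inE => /predU1P [-> | ls] p; first by rewrite exprD -mulrA.
by rewrite addnC exprD -mulrA; apply: VN.
Qed.

Lemma prod_XsubC_exp_neq0 (K : fieldType) (lams : seq K) (n : K -> nat) :
  \prod_(l <- lams) ('X - l%:P) ^+ n l != 0.
Proof. by rewrite prodf_seq_neq0; apply/allP => l _ /=; rewrite expf_neq0 ?polyXsubC_eq0. Qed.

Lemma pchar_CC : [pchar CC] =i pred0.
Proof. exact: (@pchar_num (Rdefinitions.R)[i]). Qed.

(* The conductors [(z - l)^r] of the [V_l] are replaced by a common power, and only
   [m_V != 0] matters about the denominator. *)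
Lemma in_Grad_cell (W : Cz -> Prop) : in_Grad W ->
  exists (lams : seq CC) (V : CC -> {poly CC} -> Prop) (N : nat) (m : {poly CC}),
  [/\ uniq lams, (0 < N)%N, m != 0,
      forall l, l \in lams -> is_subspace (V l) /\ forall p, V l (('X - l%:P) ^+ N * p)
    & forall f, W f <-> cell lams V m f].
Proof.
move=> [lams [V [ns [lams_uniq [Vprop WE]]]]].
have [N N_gt0 VN] := common_exponent (fun l ls => (Vprop l ls).2.1).
exists lams, V, N, (\prod_(l <- lams) ('X - l%:P) ^+ ns l); split=> //.
- exact: prod_XsubC_exp_neq0.
- by move=> l ls; split; [exact: (Vprop l ls).1 | exact: VN].
Qed.

Lemma R_W_mul (W : Cz -> Prop) : in_Grad W -> exists2 x : Cz, x != 0 & R_W W x%:P.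
Proof.
move=> /in_Grad_cell [lams [V [N [m [lams_uniq _ m0 Vprop WE]]]]].
exists ((ideal_gen lams N)%:F / m%:F).
  by rewrite mulf_neq0 ?invr_eq0 ?tofrac_eq0 ?prod_XsubC_exp_neq0.
by move=> p; apply/WE/mul_ideal_gen_cell => // l /Vprop [].
Qed.

(* Cannings--Holland: [W = R_W . 1]. *)
Lemma R_W_act1 (W : Cz -> Prop) f : in_Grad W -> W f -> exists2 E, R_W W E & dact E 1 = f.
Proof.
move=> /in_Grad_cell [lams [V [N [m [lams_uniq N_gt0 _ Vprop WE]]]]].
move=> /WE [v [Vv ->]]; exists (lift_op lams N m v); last exact: lift_op1.
move=> p; apply/WE/(lift_op_cell pchar_CC lams_uniq N_gt0) => //.
- by move=> l /Vprop [[_ [Vadd _]] _].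
- by move=> l /Vprop [[_ [_ Vscale]] _].
- by move=> l /Vprop [].
Qed.

Lemma in_A1_dmul_L_R (W : Cz -> Prop) (D E : DOp) :
  L_W W D -> R_W W E -> in_A1 (dmul D E).
Proof.
move=> DL ER; apply: (dop_coef_poly pchar_CC) => p.
by rewrite (dop_act_mul D E p%:F); apply/DL/ER.
Qed.

Theorem lemma5p3 (W : Cz -> Prop) (HW : in_Grad W)
  (Q : unitRingType) (j : DOp -> Q) (Hj : is_quot_skew_field j) :
  forall q : Q,
    (exists D : DOp, L_W W D /\ q = j D) <->
    (forall D : DOp, R_W W D -> exists a : DOp, in_A1 a /\ q * j D = j a).
Proof.
have [_ [j_inj [j1 [_ [jM _]]]]] := Hj.
move=> q; split=> [[D [DL ->]] E ER|qR].
  by exists (dmul D E); split; [exact: in_A1_dmul_L_R DL ER | rewrite jM].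
have [x x0 xR] := R_W_mul HW.
have [a [_ qx]] := qR _ xR.
set D := dmul a (x^-1)%:P.
have qD : q = j D.
  have xxV : dmul x%:P (x^-1)%:P = 1 by rewrite [LHS]dop_mulC mulfV.
  by rewrite jM -qx -mulrA -jM xxV j1 mulr1.
exists D; split=> // f Wf.
have [E ER <-] := R_W_act1 HW Wf.
have [b [b_A1 qE]] := qR _ ER.
have DEb : dmul D E = b by apply: j_inj; rewrite jM -qD.
have -> : dact D (dact E 1) = dact (dmul D E) 1 := esym (dop_act_mul D E 1).
by rewrite DEb (dop_act1 b : dact b 1 = _); apply: b_A1.
Qed.
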